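(* Let $\mathcal U$ be a $k$-universe with $\bigcup\mathcal U\subseteq\Lambda$, $\mu$ a one-wise independent distribution on $\mathbb Z_N^k$, and $M\in\mathcal M_{\mathcal U,m}$ with $m\le|\mathcal U|$. For every $f:\mathrm{Map}(M,\mathbb Z_N^k)\to\mathbb C$ and every $b\in\mathbb Z_N^\Lambda$: if $b=[\mathbf a]$ for some $\mathbf a\in\mathcal X(M)$ then $|\langle\boldsymbol R^{\Lambda,M}_\mu[f],\chi_b\rangle|\le|\widehat f(\mathbf a)|$; and if $b\neq[\mathbf a]$ for all $\mathbf a\in\mathcal X(M)$ then $\langle\boldsymbol R^{\Lambda,M}_\mu[f],\chi_b\rangle=0$.
   Context: $N\ge2$, $\mathbb Z_N=\mathbb Z/N\mathbb Z$. A $k$-universe $\mathcal U=(U_1,\dots,U_k)$ is a tuple of finite sets of common size $|\mathcal U|$; $\mathcal M_{\mathcal U,m}$ is the set of $m$-element sets of pairwise vertex-disjoint tuples in $U_1\times\dots\times U_k$. $\mu$ one-wise independent means each coordinate marginal of $\mu$ is uniform; $\mu(\cdot)$ is its pmf. For $e=(v_1,\dots,v_k)$, $x_{|e}=(x_{v_1},\dots,x_{v_k})$. $\boldsymbol R^{\Lambda,M}_\mu[f](x)=\sum_{\xi:M\to\mathbb Z_N^k}\big(\prod_{e\in M}\mu(x_{|e}-\xi(e))\big)f(\xi)$. Inner products are $\langle g,h\rangle=\mathbb E_x[g(x)\overline{h(x)}]$ with $x$ uniform; $\chi_b(x)=\exp(\frac{2\pi\mathrm i}{N}\sum_{v\in\Lambda}b_vx_v)$.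 For $\mathbf a:M\to\mathbb Z_N^k$, $\psi_{\mathbf a}(\xi)=\prod_{e\in M}\chi_{\mathbf a(e)}(\xi(e))$ (with $\chi_t(w)=\exp(\frac{2\pi\mathrm i}{N}\sum_i t_iw_i)$ on $\mathbb Z_N^k$) and $\widehat f(\mathbf a)=\langle f,\psi_{\mathbf a}\rangle$ (expectation over uniform $\xi$). $\mathcal X(M)$ is the set of $\mathbf a:M\to\mathbb Z_N^k$ such that $\mathbf a(e)$ does not have exactly one nonzero coordinate, for every $e\in M$. For $\mathbf a:M\to\mathbb Z_N^k$, $[\mathbf a]\in\mathbb Z_N^\Lambda$ is defined by $[\mathbf a]_{v_i}=\mathbf a(e)_i$ for every $e=(v_1,\dots,v_k)\in M$ and $i\in[k]$, and $[\mathbf a]_v=0$ for vertices $v$ not covered by $M$. *)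

From HB Require Import structures.
From mathcomp Require Import all_boot all_order all_algebra.
From mathcomp Require Import reals trigo.
From mathcomp Require Import complex.
Set Implicit Arguments. Unset Strict Implicit. Unset Printing Implicit Defensive.
Import Order.TTheory GRing.Theory Num.Theory.
Local Open Scope ring_scope.
Local Open Scope complex_scope.

Notation vecZ N k := {ffun 'I_k -> 'Z_N}.
Notation edge L k := {ffun 'I_k -> L}.
Notation dom M := {e | e \in M}.
Notation MapM N k M := {ffun dom M -> vecZ N k}.

Section Defs.
Variables (R : realType) (N : nat) (L : finType) (k : nat).

Definition omega : R[i] :=
  Complex (cos (2 * pi / N%:R)) (sin (2 * pi / N%:R)).

(* exp(2 pi i s / N) for s in Z_N (well defined since omega^N = 1) *)
Definition eZ (s : 'Z_N) : R[i] := omega ^+ (val s).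

(* k-universe U = (U_1,...,U_k), all of common size n (= |U|) *)
Definition is_universe (U : 'I_k -> {set L}) (n : nat) : Prop :=
  forall i, #|U i| = n.

(* M in M_{U,m}: m-element set of pairwise vertex-disjoint tuples of U_1 x...x U_k *)
Definition in_matchings (U : 'I_k -> {set L}) (m : nat) (M : {set edge L k}) : Prop :=
  [/\ #|M| = m,
      (forall e, e \in M -> forall i, e i \in U i) &
      (forall e e', e \in M -> e' \in M -> forall i j, e i = e' j -> e = e' /\ i = j)].

Definition one_wise_indep (mu : vecZ N k -> R) : Prop :=
  [/\ (forall w, 0 <= mu w), \sum_(w : vecZ N k) mu w = 1 &
      (forall (i : 'I_k) (t : 'Z_N), \sum_(w : vecZ N k | w i == t) mu w = N%:R^-1)].

Definition restr (x : {ffun L -> 'Z_N}) (e : edge L k) : vecZ N k :=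
  [ffun i => x (e i)].

Definition Rop (M : {set edge L k}) (mu : vecZ N k -> R) (f : MapM N k M -> R[i])
  (x : {ffun L -> 'Z_N}) : R[i] :=
  \sum_(xi : MapM N k M)
     (\prod_(e : dom M) (mu [ffun i => restr x (val e) i - xi e i])%:C) * f xi.

Definition inner (T : finType) (g h : T -> R[i]) : R[i] :=
  (#|T|%:R)^-1 * \sum_(x : T) g x * (h x)^*.

Definition chi (b : {ffun L -> 'Z_N}) (x : {ffun L -> 'Z_N}) : R[i] :=
  eZ (\sum_(v : L) b v * x v).

Definition chik (t : vecZ N k) (w : vecZ N k) : R[i] :=
  eZ (\sum_(i : 'I_k) t i * w i).

Definition psi (M : {set edge L k}) (a : MapM N k M) (xi : MapM N k M) : R[i] :=
  \prod_(e : dom M) chik (a e) (xi e).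

Definition fhat (M : {set edge L k}) (f : MapM N k M -> R[i]) (a : MapM N k M) : R[i] :=
  inner f (psi a).

Definition XM (M : {set edge L k}) : pred (MapM N k M) :=
  fun a => [forall e, #|[set i | a e i != 0]| != 1%N].

Definition bracket (M : {set edge L k}) (a : MapM N k M) : {ffun L -> 'Z_N} :=
  [ffun v => if [pick p : dom M * 'I_k | val p.1 p.2 == v] is Some p
             then a p.1 p.2 else 0].

End Defs.
Arguments XM {N L k} M _.
Arguments chi {R N L} b x.
Arguments Rop {R N L k M} mu f x.
Arguments fhat {R N L k M} f a.
Arguments inner {R T} g h.
Arguments bracket {N L k M} a.

(** Writing
    [mu(w) = N^-k sum_t muhat(t) chi_t(w)] with [muhat(t) = sum_z mu(z) chi_t(-z)]
    and expanding the product over the edges of M gives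
    [<R[f], chi_b> = sum_{a : [a] = b} (prod_e muhat(a e)) fhat(a)].
    Vertex disjointness of M makes [a |-> [a]] injective, so at most one term
    survives; [|muhat| <= 1] because mu is a probability distribution, and
    one-wise independence makes [muhat(t) = 0] whenever t has exactly one
    nonzero coordinate, i.e. the surviving term vanishes unless [a \in X(M)]. *)

From HB Require Import structures.
From mathcomp Require Import all_boot all_order all_algebra.
From mathcomp Require Import reals trigo complex ring lra.
Set Implicit Arguments. Unset Strict Implicit. Unset Printing Implicit Defensive.
Import Order.TTheory GRing.Theory Num.Theory.
Local Open Scope ring_scope.
Local Open Scope complex_scope.

Section Cis.
Variable R : realType.

Definition cis (x : R) : R[i] := Complex (cos x) (sin x).

Lemma cisD (x y : R) : cis x * cis y = cis (x + y).
Proof. by rewrite /cis cosD sinD -[LHS]/(mulc _ _) /mulc; congr Complex; ring. Qed.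

Lemma cisMn (x : R) n : cis x ^+ n = cis (x *+ n).
Proof.
elim: n => [|n IH]; first by rewrite expr0 mulr0n /cis cos0 sin0.
by rewrite exprS IH cisD mulrS.
Qed.

Lemma norm_cis (x : R) : `|cis x| = 1.
Proof.
apply/eqP; rewrite -sqrp_eq1 // normCK -[_ * _]/(mulc _ _) /mulc /= eq_complex /=.
by rewrite !mulrN opprK -!expr2 cos2Dsin2 eqxx /= mulrC addNr eqxx.
Qed.

Lemma cis_neq1 (y : R) : 0 < y < pi -> cis (y *+ 2) != 1.
Proof.
move=> /sin_gt0_pi /gt_eqF sin_neq0; apply/negP => /eqP /(congr1 (@complex.Re R)) /=.
rewrite cos_mulr2n => cos2y_eq1.
have : sin y ^+ 2 = 0 by rewrite sin2cos2; move: cos2y_eq1; rewrite mulr2n; lra.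
by move/eqP; rewrite expf_eq0 /= sin_neq0.
Qed.

End Cis.

Section RootsOfUnity.
Variables (R : realType) (N : nat).
Hypothesis N_gt1 : (1 < N)%N.
Local Notation eZ := (@eZ R N).

Lemma omegaE : omega R N = cis (2 * pi / N%:R).
Proof. by []. Qed.

Lemma omegaN : omega R N ^+ (Zp_trunc N).+2 = 1.
Proof.
have N_neq0 : (N%:R : R) != 0 by rewrite pnatr_eq0 -lt0n ltnW.
rewrite Zp_cast // omegaE cisMn -[_ *+ N]mulr_natr divfK // mulr_natl.
by rewrite /cis cos2pi sin2pi.
Qed.

Lemma omegaX_neq1 c : (0 < c < N)%N -> omega R N ^+ c != 1.
Proof.
case/andP => c_gt0 c_ltN.
have N_gt0 : (0 < N%:R :> R) by rewrite ltr0n ltnW.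
have theta_c : (2 * pi / N%:R) *+ c = (pi * c%:R / N%:R) *+ 2 :> R.
  by rewrite -[_ *+ c]mulr_natr -[_ *+ 2]mulr_natr; ring.
rewrite omegaE cisMn theta_c; apply: cis_neq1; apply/andP; split.
  by rewrite divr_gt0 // mulr_gt0 ?pi_gt0 // ltr0n.
by rewrite ltr_pdivrMr // ltr_pM2l ?pi_gt0 // ltr_nat.
Qed.

Lemma eZD (s t : 'Z_N) : eZ (s + t) = eZ s * eZ t.
Proof. by rewrite /eZ /= (expr_mod _ omegaN) exprD. Qed.

Lemma eZ0 : eZ 0 = 1.
Proof. by rewrite /eZ expr0. Qed.

Lemma eZM (c s : 'Z_N) : eZ (c * s) = eZ c ^+ s.
Proof. by rewrite /eZ /= (expr_mod _ omegaN) exprM. Qed.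

Lemma eZ_sum (I : Type) (r : seq I) (P : pred I) (F : I -> 'Z_N) :
  eZ (\sum_(i <- r | P i) F i) = \prod_(i <- r | P i) eZ (F i).
Proof. exact: (big_morph eZ eZD eZ0). Qed.

Lemma norm_eZ s : `|eZ s| = 1.
Proof. by rewrite /eZ normrX omegaE norm_cis expr1n. Qed.

Lemma eZ_neq0 s : eZ s != 0.
Proof. by rewrite -normr_eq0 norm_eZ oner_eq0. Qed.

Lemma conj_eZ s : Num.conj (eZ s) = eZ (- s).
Proof.
apply: (@mulfI _ (eZ s)); first exact: eZ_neq0.
by rewrite -normCK norm_eZ expr1n -eZD subrr eZ0.
Qed.

Lemma sum_eZM (c : 'Z_N) : \sum_(s : 'Z_N) eZ (c * s) = (c == 0)%:R * N%:R.
Proof.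
under eq_bigr => s _ do rewrite eZM.
have [->|c_neq0] := eqVneq c 0.
  rewrite eZ0 mul1r; under eq_bigr => s _ do rewrite expr1n.
  by rewrite sumr_const card_ord Zp_cast.
have eZc_neq1 : eZ c != 1.
  apply: omegaX_neq1; rewrite lt0n -[X in (_ < X)%N](Zp_cast N_gt1) ltn_ord.
  by rewrite andbT; apply: contra c_neq0 => /eqP c0; apply/eqP/val_inj.
have /eqP := subrX1 (eZ c) (Zp_trunc N).+2.
rewrite /eZ -exprM mulnC exprM omegaN expr1n subrr eq_sym mulf_eq0 subr_eq0.
by rewrite (negbTE eZc_neq1) mul0r => /eqP.
Qed.

Lemma sum_eZ_dot (I : finType) (c : {ffun I -> 'Z_N}) :
  \sum_(x : {ffun I -> 'Z_N}) eZ (\sum_i c i * x i)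
   = (c == 0)%:R * #|{ffun I -> 'Z_N}|%:R.
Proof.
under eq_bigr => x _ do rewrite eZ_sum.
rewrite -(bigA_distr_bigA (fun i s => eZ (c i * s))).
under eq_bigr => i _ do rewrite sum_eZM.
have [->|c_neq0] := eqVneq c 0.
  under eq_bigr => i _ do rewrite ffunE eqxx mul1r.
  by rewrite prodr_const card_ffun card_ord Zp_cast // natrX cardE mul1r.
have [i ci_neq0] : exists i, c i != 0.
  apply/existsP; apply: contraR c_neq0 => /existsPn ci0.
  by apply/eqP/ffunP => i; rewrite ffunE; apply/eqP/negPn.
by rewrite (bigD1 i) //= (negbTE ci_neq0) !mul0r.
Qed.

End RootsOfUnity.

Lemma natr_card_neq0 (C : numDomainType) (T : finType) (x : T) : (#|T|%:R : C) != 0.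
Proof. by rewrite pnatr_eq0 -lt0n; apply/card_gt0P; exists x. Qed.

Lemma ffun_subr_eq0 (I : finType) (G : zmodType) (w z : {ffun I -> G}) :
  ([ffun i => w i - z i] == 0) = (z == w).
Proof.
apply/eqP/eqP => [/ffunP wz0 | ->]; last by apply/ffunP => i; rewrite !ffunE subrr.
by apply/ffunP => i; move: (wz0 i); rewrite !ffunE => /eqP; rewrite subr_eq0 => /eqP.
Qed.

Section FourierMu.
Variables (R : realType) (N : nat) (k : nat) (mu : vecZ N k -> R).
Hypothesis N_gt1 : (1 < N)%N.
Local Notation eZ := (@eZ R N).

Definition muhat (t : vecZ N k) : R[i] :=
  \sum_(z : vecZ N k) (mu z)%:C * eZ (- \sum_i t i * z i).

Lemma norm_muhat_le1 t :
  (forall w, 0 <= mu w) -> \sum_w mu w = 1 -> `|muhat t| <= 1.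
Proof.
move=> mu_ge0 mu_sum1; apply: le_trans (ler_norm_sum _ _ _) _.
rewrite (eq_bigr (fun z => (mu z)%:C)); last first.
  by move=> z _; rewrite normrM norm_eZ // mulr1 ger0_norm // ler0c.
by rewrite -rmorph_sum mu_sum1.
Qed.

Lemma muhat_single_support_eq0 (t : vecZ N k) :
  (forall (i : 'I_k) (s : 'Z_N), \sum_(w : vecZ N k | w i == s) mu w = N%:R^-1) ->
  #|[set i | t i != 0]| = 1%N -> muhat t = 0.
Proof.
move=> mu_marginal /eqP /cards1P [i supp_t].
have supp_tE j : (t j != 0) = (j == i) by rewrite -in_set1 -supp_t inE.
have ti_neq0 : t i != 0 by rewrite supp_tE.
rewrite /muhat (eq_bigr (fun z => (mu z)%:C * eZ (- (t i * z i)))); last first.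
  move=> z _; rewrite (bigD1 i) //= big1 ?addr0 // => j /negbTE.
  by rewrite -supp_tE => /negbFE /eqP ->; rewrite mul0r.
rewrite (partition_big (fun z : vecZ N k => z i) predT) //=.
rewrite (eq_bigr (fun s => (N%:R^-1)%:C * eZ ((- t i) * s))); last first.
  move=> s _; rewrite (eq_bigr (fun z => (mu z)%:C * eZ (- (t i * s)))).
    by rewrite -big_distrl /= -rmorph_sum mu_marginal mulNr.
  by move=> z /eqP ->.
by rewrite -mulr_sumr sum_eZM // oppr_eq0 (negbTE ti_neq0) !mul0r mulr0.
Qed.

Local Notation K := #|vecZ N k|.

Lemma muhat_inversion w :
  (mu w)%:C = \sum_(t : vecZ N k) K%:R^-1 * muhat t * eZ (\sum_i t i * w i).
Proof.
rewrite (eq_bigr (fun t : vecZ N k => \sum_z K%:R^-1 * (mu z)%:C *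
    eZ (\sum_i [ffun i => w i - z i] i * t i))); last first.
  move=> t _; rewrite /muhat big_distrr big_distrl /=; apply: eq_bigr => z _.
  rewrite -!mulrA -eZD //; do 2 congr (_ * _); congr eZ.
  rewrite -sumrN -big_split /=; apply: eq_bigr => i _.
  by rewrite ffunE mulrBl addrC mulrC [t i * _]mulrC.
rewrite exchange_big /=.
under eq_bigr => z _ do rewrite -big_distrr /= sum_eZ_dot //.
rewrite (bigD1 w) //= big1 ?addr0; last first.
  by move=> z /negbTE z_neq_w; rewrite ffun_subr_eq0 z_neq_w mul0r mulr0.
rewrite ffun_subr_eq0 eqxx mul1r mulrAC mulVf ?mul1r //.
exact: natr_card_neq0 _ (0 : vecZ N k).
Qed.

End FourierMu.

Section NoiseOperator.
Variables (R : realType) (N : nat) (L : finType) (k : nat) (M : {set edge L k})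
  (mu : vecZ N k -> R).
Hypothesis N_gt1 : (1 < N)%N.
Hypothesis M_disjoint : forall e e', e \in M -> e' \in M ->
  forall i j, e i = e' j -> e = e' /\ i = j.
Local Notation D := (dom M).
Local Notation eZ := (@eZ R N).
Local Notation muhat := (@muhat R N k mu).

Definition vertex (p : D * 'I_k) : L := val p.1 p.2.

Lemma vertex_inj : injective vertex.
Proof.
move=> [e i] [e' j]; rewrite /vertex /=.
by move=> /(M_disjoint (valP e) (valP e')) [/val_inj -> ->].
Qed.

Lemma bracket_vertex (a : MapM N k M) p : bracket a (vertex p) = a p.1 p.2.
Proof.
rewrite /bracket ffunE; case: pickP => [q /eqP /vertex_inj -> // | no_pick].
by have := no_pick p; rewrite eqxx.
Qed.

Lemma bracket_inj : injective (@bracket N L k M).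
Proof.
move=> a a' aa'; apply/ffunP => e; apply/ffunP => i.
by rewrite -(bracket_vertex a (e, i)) -(bracket_vertex a' (e, i)) aa'.
Qed.

Lemma bracket_dot (a : MapM N k M) (x : {ffun L -> 'Z_N}) :
  \sum_v bracket a v * x v = \sum_(e : D) \sum_(i < k) a e i * x (val e i).
Proof.
rewrite (bigID (mem (vertex @: setT))) /= [X in _ + X]big1 ?addr0; last first.
  move=> v v_notin; rewrite /bracket ffunE; case: pickP => [q /eqP vq|_].
    by move: v_notin; rewrite -vq (imset_f vertex (in_setT q)).
  by rewrite mul0r.
rewrite big_imset /=; last by move=> p q _ _; exact: vertex_inj.
by rewrite pair_bigA; apply: eq_big => [p|p _]; rewrite ?in_setT ?bracket_vertex.
Qed.

Lemma conj_psi (a xi : MapM N k M) :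
  Num.conj (psi R a xi) = eZ (- \sum_(e : D) \sum_(i < k) a e i * xi e i).
Proof. by rewrite /psi /chik -eZ_sum // conj_eZ. Qed.

Definition muhat_prod (a : MapM N k M) : R[i] :=
  \prod_(e : D) (#|vecZ N k|%:R^-1 * muhat (a e)).

Lemma Rop_fourier (f : MapM N k M -> R[i]) x : Rop mu f x =
  \sum_(xi : MapM N k M) \sum_(a : MapM N k M)
     muhat_prod a * eZ (\sum_v bracket a v * x v) * Num.conj (psi R a xi) * f xi.
Proof.
rewrite /Rop; apply: eq_bigr => xi _; rewrite -mulr_suml; congr (_ * _).
under eq_bigr => e _ do rewrite muhat_inversion //.
rewrite bigA_distr_bigA /=; apply: eq_bigr => a _.
rewrite big_split /= -mulrA; congr (_ * _).
rewrite conj_psi -eZD // -eZ_sum // bracket_dot; congr eZ.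
rewrite -sumrN -big_split; apply: eq_bigr => e _ /=.
rewrite -sumrN -big_split; apply: eq_bigr => i _ /=.
by rewrite !ffunE mulrBr.
Qed.

Lemma inner_Rop_chi (f : MapM N k M -> R[i]) (b : {ffun L -> 'Z_N}) :
  inner (Rop mu f) (chi b) = \sum_(a : MapM N k M)
     (bracket a == b)%:R * (\prod_(e : D) muhat (a e)) * fhat f a.
Proof.
pose P (a : MapM N k M) (x : {ffun L -> 'Z_N}) :=
  eZ (\sum_v bracket a v * x v) * eZ (- \sum_v b v * x v).
pose Q (a xi : MapM N k M) := f xi * Num.conj (psi R a xi).
have Rop_chi x : Rop mu f x * Num.conj (chi b x) =
    \sum_a \sum_xi muhat_prod a * P a x * Q a xi.
  rewrite Rop_fourier big_distrl exchange_big /=; apply: eq_bigr => a _.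
  rewrite big_distrl /=; apply: eq_bigr => xi _.
  by rewrite /chi conj_eZ // /P /Q; ring.
have sum_P (a : MapM N k M) :
    \sum_x P a x = (bracket a == b)%:R * #|{ffun L -> 'Z_N}|%:R.
  rewrite eq_sym -(ffun_subr_eq0 (bracket a) b) -sum_eZ_dot //.
  apply: eq_bigr => x _; rewrite /P -eZD //; congr eZ.
  rewrite -sumrN -big_split /=; apply: eq_bigr => v _.
  by rewrite ffunE mulrBl.
have prod_muhat (a : MapM N k M) :
    \prod_(e : D) muhat (a e) = #|MapM N k M|%:R * muhat_prod a.
  rewrite /muhat_prod big_split /= prodr_const card_ffun natrX mulrA -exprMn.
  rewrite mulfV ?expr1n ?mul1r //; exact: natr_card_neq0 _ (0 : vecZ N k).
rewrite /inner (eq_bigr _ (fun x _ => Rop_chi x)) exchange_big /= mulr_sumr.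
apply: eq_bigr => a _; rewrite prod_muhat /fhat /inner.
rewrite (eq_bigr (fun x => muhat_prod a * P a x * \sum_xi Q a xi)); last first.
  by move=> x _; rewrite big_distrr.
rewrite -big_distrl /= -big_distrr /= sum_P /Q.
by field; rewrite (natr_card_neq0 _ (0 : MapM N k M)) (natr_card_neq0 _ b).
Qed.

End NoiseOperator.

Local Close Scope complex_scope.

Theorem lemma6p6 (R : realType) (N : nat) (L : finType) (k n m : nat)
  (U : 'I_k -> {set L}) (mu : vecZ N k -> R) (M : {set edge L k})
  (f : MapM N k M -> R[i]) (b : {ffun L -> 'Z_N}) :
  (1 < N)%N ->
  is_universe U n ->
  one_wise_indep mu ->
  in_matchings U m M ->
  (m <= n)%N ->
  (forall a : MapM N k M, a \in XM M -> b = bracket a ->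
     `|inner (Rop mu f) (chi b)| <= `|fhat f a|) /\
  ((forall a : MapM N k M, a \in XM M -> b <> bracket a) ->
     inner (Rop mu f) (chi b) = 0).
Proof.
move=> N_gt1 _ [mu_ge0 mu_sum1 mu_marginal] [_ _ M_disjoint] _.
rewrite inner_Rop_chi //; split=> [a _ -> | b_notin_X].
  rewrite (bigD1 a) //= [X in _ + X]big1 ?addr0; last first.
    move=> a' /negbTE a'_neq_a.
    by rewrite (inj_eq (bracket_inj M_disjoint)) a'_neq_a !mul0r.
  rewrite eqxx mul1r normrM ler_piMl // normr_prod.
  by apply: prodr_ile1 => e _; rewrite normr_ge0 norm_muhat_le1.
apply: big1 => a _; have [ba|_] := eqVneq (bracket a) b; last by rewrite !mul0r.
have : a \notin XM M by apply/negP => a_in_X; exact: b_notin_X a a_in_X (esym ba).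
rewrite unfold_in negb_forall => /existsP [e /negPn /eqP supp_ae].
by rewrite (bigD1 e) //= muhat_single_support_eq0 // mul0r mulr0 mul0r.
Qed.
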